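(* Let $d$ be a positive integer and $q$ a prime power. Then there exists $N$ such that for every integer $n\ge N$ there exists a $q$-GDD of type $n^{q^d}$ (that is, $q^d$ groups each of size $n$) with strong dimension at least $d$.
   Context: A group divisible design (GDD) is a triple $(X,\Pi,\mathcal{B})$ where $X$ is a finite set of points, $\Pi$ is a partition of $X$ into groups, and $\mathcal{B}$ is a set of subsets of $X$ (blocks) such that each block meets each group in at most one point and any two points from distinct groups lie together in exactly one block; a $k$-GDD is one in which every block has size $k$. The type $g^u$ means $u$ groups of size $g$. A strong subspace of the GDD is a subset $X'\subseteq X$ that is a union of groups and such that every block containing two points of $X'$ is contained in $X'$; it is proper if $X'\ne X$. The GDD has strong dimension at least $d$ if every set of at most $d$ points is contained in a proper strong subspace. *)

From mathcomp Require Import all_boot.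
Set Implicit Arguments. Unset Strict Implicit. Unset Printing Implicit Defensive.

Section GDD.
Variable T : finType.

Definition is_GDD (G B : {set {set T}}) : Prop :=
  [/\ partition G [set: T],
      (forall b g, b \in B -> g \in G -> #|b :&: g| <= 1) &
      (forall x y, pblock G x != pblock G y ->
         #|[set b in B | (x \in b) && (y \in b)]| = 1)].

Definition is_kGDD (k : nat) (G B : {set {set T}}) : Prop :=
  is_GDD G B /\ (forall b, b \in B -> #|b| = k).

Definition has_type (g u : nat) (G : {set {set T}}) : Prop :=
  #|G| = u /\ (forall A, A \in G -> #|A| = g).

Definition strong_subspace (G B : {set {set T}}) (S : {set T}) : Prop :=
  S = \bigcup_(g in G | g \subset S) g /\
  (forall b, b \in B -> 1 < #|b :&: S| -> b \subset S).

Definition strong_dim_ge (G B : {set {set T}}) (d : nat) : Prop :=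
  forall A : {set T}, #|A| <= d ->
    exists S : {set T}, [/\ strong_subspace G B S, S != [set: T] & A \subset S].
End GDD.

Definition prime_power (q : nat) : Prop :=
  exists p k, [/\ prime p, 0 < k & q = p ^ k].

From mathcomp Require Import all_boot all_algebra all_field.
From mathcomp Require Import cyclic boolp ring zify.
Set Implicit Arguments. Unset Strict Implicit. Unset Printing Implicit Defensive.
Import GRing.Theory.

(* Let F be the field with q elements and S a set of n symbols
   carrying an orthogonal array OA(q, n) with columns indexed by F.  The
   points are F^d * S, the groups are the fibres {v} * S, and for every
   affine line of F^d, with a fixed parametrization t |-> u + t w, and every
   row r of the OA, {(u + t w, r t) | t in F} is a block.  Two points in
   distinct fibres determine the line through their first coordinates and
   then, by the OA property, a unique row.  Any d points of F^d lie on an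
   affine hyperplane H, and H * S is a proper strong subspace because a line
   meeting H twice lies in H.

   It remains to find an OA(q, n) for every large n (Chowla, Erdos and
   Straus). *)

(* This is the same
   object as a transversal design TD(k, n). *)
Definition is_OA (C S : finType) (P : {ffun C -> S} -> Prop) : Prop :=
  forall i j : C, i != j -> forall a b : S,
    exists! r, P r /\ r i = a /\ r j = b.

Definition OA_exists (k n : nat) : Prop :=
  exists (S : finType) (P : {ffun 'I_k -> S} -> Prop), #|S| = n /\ is_OA P.
Definition OA_const_exists (k n : nat) : Prop :=
  exists (S : finType) (P : {ffun 'I_k -> S} -> Prop),
    [/\ #|S| = n, is_OA P & exists c, P [ffun=> c]].

Lemma OA_of_const k n : OA_const_exists k n -> OA_exists k n.
Proof. by move=> [S [P [cS oa _]]]; exists S, P. Qed.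

Section CardBijection.
Variables (A B : finType) (eAB : #|A| = #|B|).
Definition card_bij (x : A) : B := enum_val (cast_ord eAB (enum_rank x)).
Definition card_bij_inv (y : B) : A :=
  enum_val (cast_ord (esym eAB) (enum_rank y)).
Lemma card_bijK : cancel card_bij card_bij_inv.
Proof. by move=> x; rewrite /card_bij /card_bij_inv enum_valK cast_ordK enum_rankK. Qed.
Lemma card_bij_invK : cancel card_bij_inv card_bij.
Proof. by move=> y; rewrite /card_bij /card_bij_inv enum_valK cast_ordKV enum_rankK. Qed.
End CardBijection.

Lemma is_OA_relabel (C S S' : finType) (P : {ffun C -> S} -> Prop)
    (f : S -> S') (g : S' -> S) : cancel f g -> cancel g f -> is_OA P ->
  is_OA (fun r : {ffun C -> S'} => P [ffun i => g (r i)]).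
Proof.
move=> fK gK oa i j ij a b.
have [r [[Pr [ri rj]] r_uniq]] := oa i j ij (g a) (g b).
exists [ffun x => f (r x)]; split.
  have -> : [ffun i => g ([ffun x => f (r x)] i)] = r.
    by apply/ffunP=> x; rewrite !ffunE fK.
  by split; rewrite // !ffunE ri rj !gK.
move=> r' [Pr' [r'i r'j]].
have -> : r = [ffun i => g (r' i)] by apply: r_uniq; rewrite !ffunE r'i r'j.
by apply/ffunP=> x; rewrite !ffunE gK.
Qed.

Lemma is_OA_reindex (C C' S : finType) (P : {ffun C -> S} -> Prop)
    (h : C' -> C) (h' : C -> C') : cancel h h' -> cancel h' h -> is_OA P ->
  is_OA (fun r : {ffun C' -> S} => P [ffun c => r (h' c)]).
Proof.
move=> hK h'K oa i j ij a b.
have hij : h i != h j by rewrite (can_eq hK).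
have [r [[Pr [ri rj]] r_uniq]] := oa _ _ hij a b.
exists [ffun x => r (h x)]; split.
  have -> : [ffun c => [ffun x => r (h x)] (h' c)] = r.
    by apply/ffunP=> x; rewrite !ffunE h'K.
  by split; rewrite // !ffunE ri rj.
move=> r' [Pr' [r'i r'j]].
have -> : r = [ffun c => r' (h' c)] by apply: r_uniq; rewrite !ffunE !hK r'i r'j.
by apply/ffunP=> x; rewrite !ffunE hK.
Qed.

Lemma OA_on k n (S : finType) : OA_exists k n -> #|S| = n ->
  exists P : {ffun 'I_k -> S} -> Prop, is_OA P.
Proof.
move=> [S0 [P [cS0 oa]]] cS; have e : #|S0| = #|S| by rewrite cS0 cS.
by eexists; apply: (is_OA_relabel (card_bijK e) (card_bij_invK e) oa).
Qed.

Section RingOA.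
Local Open Scope ring_scope.
Variables (R : finComUnitRingType) (k : nat) (c : 'I_k -> R).
Hypothesis c_sep : forall i j, i != j -> c i - c j \is a GRing.unit.

Definition affine_row (r : {ffun 'I_k -> R}) : Prop :=
  exists x y, r = [ffun i => x + c i * y].

Lemma affine_row_OA : is_OA affine_row.
Proof.
move=> i j ij a b; have u := c_sep ij.
pose y := (a - b) / (c i - c j); pose x := a - c i * y.
have ey : (c i - c j) * y = a - b by rewrite /y mulrC divrK.
exists [ffun l => x + c l * y]; split.
  split; first by exists x, y.
  rewrite !ffunE /x; split; first by ring.
  have -> : a - c i * y + c j * y = a - (c i - c j) * y by ring.
  by rewrite ey; ring.
move=> _ [[x' [y' ->]] [ri rj]]; rewrite !ffunE in ri rj.
have ey' : (c i - c j) * y' = a - b by rewrite -ri -rj; ring.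
have yy : y' = y by apply: (mulrI u); rewrite ey ey'.
have xx : x' = x by rewrite /x -ri yy; ring.
by rewrite xx yy.
Qed.

Lemma affine_row_const a : affine_row [ffun=> a].
Proof. by exists a, 0; apply/ffunP=> i; rewrite !ffunE mulr0 addr0. Qed.
End RingOA.

Lemma OA_const_ring (R : finComUnitRingType) k (c : 'I_k -> R) :
  (forall i j, i != j -> (c i - c j)%R \is a GRing.unit) -> OA_const_exists k #|R|.
Proof.
move=> c_sep; exists R, (affine_row c); split => //; first exact: affine_row_OA.
by exists 0%R; apply: affine_row_const.
Qed.

Lemma OA_const_field (F : finFieldType) k : k <= #|F| -> OA_const_exists k #|F|.
Proof.
move=> kF; pose c (i : 'I_k) : F := enum_val (Ordinal (leq_trans (ltn_ord i) kF)).
apply: (@OA_const_ring F k c) => i j ij; rewrite unitfE subr_eq0.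
by apply: contra ij => /eqP/enum_val_inj [] /eqP; rewrite -(inj_eq val_inj).
Qed.

Lemma OA_const_pow2 k s : 0 < s -> k <= 2 ^ s -> OA_const_exists k (2 ^ s).
Proof.
move=> s_gt0 ks; have [F _ cF] := @pPrimePowerField 2 s isT s_gt0.
by rewrite -cF; apply: OA_const_field; rewrite cF.
Qed.

Definition prime_factors_ge (k N : nat) : Prop :=
  forall p, prime p -> p %| N -> k <= p.

Lemma prime_factors_ge_coprime k N d :
  prime_factors_ge k N -> 0 < d < k -> coprime N d.
Proof.
move=> hN /andP[d_gt0 dk]; apply: contraT => not_cop.
have g_gt1 : 1 < gcdn N d.
  by move: not_cop; rewrite /coprime ltn_neqAle eq_sym => ->; rewrite gcdn_gt0 d_gt0 orbT.
have pg := pdiv_dvd (gcdn N d); have pp := pdiv_prime g_gt1.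
have := hN _ pp (dvdn_trans pg (dvdn_gcdl _ _)).
have := dvdn_leq d_gt0 (dvdn_trans pg (dvdn_gcdr _ _)); lia.
Qed.

Lemma OA_const_cyclic k N : 0 < N -> prime_factors_ge k N -> OA_const_exists k N.
Proof.
move=> N_gt0 hN; case: (ltngtP N 1) => [|N_gt1|->]; first lia.
  have cardZ : #|'Z_N| = N by rewrite card_ord Zp_cast.
  rewrite -cardZ; apply: (@OA_const_ring _ k (fun i => (i : nat)%:R%R)) => i j ij.
  wlog lt_ij : i j ij / i < j.
    move=> H; case: (ltngtP i j) => [l|l|e]; first exact: H.
      by rewrite -opprB unitrN; apply: H; rewrite // eq_sym.
    by move: ij; rewrite -(inj_eq val_inj) /= e eqxx.
  rewrite -opprB unitrN -natrB 1?ltnW // unitZpE //.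
  apply: (prime_factors_ge_coprime hN).
  by rewrite subn_gt0 lt_ij /=; have := ltn_ord j; lia.
exists unit, (fun _ => True); split; [by rewrite card_unit | | by exists tt].
move=> i j _ [] []; exists [ffun=> tt]; split => [|r _]; first by rewrite !ffunE.
by apply/ffunP=> x; case: (r x); rewrite ffunE.
Qed.

(* Wilson's construction.  From an OA(k+1, t) on T, an OA(k, m+1) on Q with a
   constant row (c, ..., c), an OA(k, m) on Q' = Q \ {c}, an OA(k, u) on U and
   an injection e : U -> T (so u <= t), we build an OA(k, m t + u) on the
   symbol set (T * Q') + U.  Its rows are
   (a) i |-> (rho i, sg i), for rows rho of the OA(k+1, t) whose last entry
       is outside e(U) and rows sg of the OA(k, m) on Q';
   (b) i |-> (rho i, sg i) if sg i != c, and x otherwise, for rows rho whose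
       last entry is e x and non-constant rows sg of the OA(k, m+1) on Q;
   (c) the rows of the OA(k, u) on U.
   Here rho i stands for the entry of rho in column i of the first k columns. *)
Section Wilson.
Variables (k : nat) (T Q U : finType) (c : Q).
Local Notation Q' := {x : Q | x != c}.
Local Notation S := ((T * Q') + U)%type.
Variables (PT : {ffun 'I_k.+1 -> T} -> Prop) (PQ : {ffun 'I_k -> Q} -> Prop)
  (PQ' : {ffun 'I_k -> Q'} -> Prop) (PU : {ffun 'I_k -> U} -> Prop)
  (e : U -> T).
Hypotheses (oaT : is_OA PT) (oaQ : is_OA PQ) (PQc : PQ [ffun=> c])
  (oaQ' : is_OA PQ') (oaU : is_OA PU) (e_inj : injective e).

Definition wid (i : 'I_k) : 'I_k.+1 := widen_ord (leqnSn k) i.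

Lemma wid_neq_max i : wid i != ord_max.
Proof. by rewrite -(inj_eq val_inj) /= neq_ltn ltn_ord. Qed.

Lemma wid_neq i j : i != j -> wid i != wid j.
Proof. by apply: contra => /eqP/(congr1 val)/val_inj/eqP. Qed.

Definition merge_row (rho : {ffun 'I_k.+1 -> T}) (sg : {ffun 'I_k -> Q}) (x : U)
    : {ffun 'I_k -> S} :=
  [ffun i => if (insub (sg i) : option Q') is Some q then inl (rho (wid i), q) else inr x].

Lemma merge_row_inl rho sg x i tau (q : Q') :
  merge_row rho sg x i = inl (tau, q) <-> rho (wid i) = tau /\ sg i = val q.
Proof.
rewrite ffunE; case: insubP => [q' _ <-|].
  by split=> [[-> ->] | [-> /val_inj ->]].
rewrite negbK => /eqP sgc; split=> // -[_ sgq].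
by move: (valP q); rewrite -sgq sgc eqxx.
Qed.

Lemma merge_row_inr rho sg x i y :
  merge_row rho sg x i = inr y <-> sg i = c /\ x = y.
Proof.
rewrite ffunE; case: insubP => [q' q'c sgq|].
  by split=> // -[sgc]; rewrite sgc eqxx in q'c.
by rewrite negbK => /eqP sgc; split=> [[->] | [_ ->]].
Qed.

Definition wilson_row (r : {ffun 'I_k -> S}) : Prop :=
  [\/ exists rho sg, [/\ PT rho, forall x, e x <> rho ord_max, PQ' sg &
        r = [ffun i => inl (rho (wid i), sg i)]],
      exists rho sg x, [/\ PT rho, e x = rho ord_max, PQ sg,
        sg <> [ffun=> c] & r = merge_row rho sg x] |
      exists pi, PU pi /\ r = [ffun i => inr (pi i)]].

Lemma row_not_const (sg : {ffun 'I_k -> Q}) i (q : Q') : sg i = val q -> sg <> [ffun=> c].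
Proof. by move=> sgq sgc; move: (valP q); rewrite -sgq sgc ffunE eqxx. Qed.

Section PairInl.
Variables (i j : 'I_k) (tau tau2 : T) (q q2 : Q') (rho : {ffun 'I_k.+1 -> T}).
Hypotheses (ij : i != j) (PTrho : PT rho)
  (rho_i : rho (wid i) = tau) (rho_j : rho (wid j) = tau2)
  (rho_uniq : forall rho', PT rho' -> rho' (wid i) = tau -> rho' (wid j) = tau2 ->
     rho = rho').

(* Two symbols of T * Q' when the last entry of rho is e x: a row of kind (b). *)
Lemma wilson_pair_inl_hit x : e x = rho ord_max ->
  exists! r, wilson_row r /\ r i = inl (tau, q) /\ r j = inl (tau2, q2).
Proof.
move=> ex; have [sg [[PQsg [sg_i sg_j]] sg_uniq]] := oaQ ij (val q) (val q2).
exists (merge_row rho sg x); split.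
  split; first by apply: Or32; exists rho, sg, x; split=> //; apply: row_not_const sg_i.
  by split; apply/merge_row_inl.
move=> r [[[rho' [sg' [PTr' nhit _ ->]]] | [rho' [sg' [x' [PTr' ex' PQ'sg' _ ->]]]] |
          [pi [_ ->]]] [r_i r_j]].
- move: r_i r_j; rewrite !ffunE => -[r_i _] [r_j _].
  by case: (nhit x); rewrite ex (rho_uniq PTr').
- move/merge_row_inl: r_i => [r_i s_i]; move/merge_row_inl: r_j => [r_j s_j].
  have <- := rho_uniq PTr' r_i r_j; have <- := sg_uniq _ (conj PQ'sg' (conj s_i s_j)).
  by have <- // : x = x'; apply: e_inj; rewrite ex ex' (rho_uniq PTr').
- by rewrite ffunE in r_i.
Qed.

(* Two symbols of T * Q' when the last entry of rho avoids e(U): kind (a). *)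
Lemma wilson_pair_inl_miss : (forall x, e x <> rho ord_max) ->
  exists! r, wilson_row r /\ r i = inl (tau, q) /\ r j = inl (tau2, q2).
Proof.
move=> nhit; have [sg [[PQ'sg [sg_i sg_j]] sg_uniq]] := oaQ' ij q q2.
exists [ffun l => inl (rho (wid l), sg l)]; split.
  split; first by apply: Or31; exists rho, sg.
  by rewrite !ffunE rho_i rho_j sg_i sg_j.
move=> r [[[rho' [sg' [PTr' _ PQ'sg' ->]]] | [rho' [sg' [x' [PTr' ex' _ _ ->]]]] |
          [pi [_ ->]]] [r_i r_j]].
- move: r_i r_j; rewrite !ffunE => -[r_i s_i] [r_j s_j].
  have <- := rho_uniq PTr' r_i r_j.
  by have <- := sg_uniq _ (conj PQ'sg' (conj s_i s_j)).
- move/merge_row_inl: r_i => [r_i _]; move/merge_row_inl: r_j => [r_j _].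
  by case: (nhit x'); rewrite ex' (rho_uniq PTr').
- by rewrite ffunE in r_i.
Qed.
End PairInl.

Lemma wilson_pair_inl_inl i j tau tau2 q q2 : i != j ->
  exists! r, wilson_row r /\ r i = inl (tau, q) /\ r j = inl (tau2, q2).
Proof.
move=> ij; have [rho [[PTrho [rho_i rho_j]] rho_uniq]] := oaT (wid_neq ij) tau tau2.
have {}rho_uniq rho' : PT rho' -> rho' (wid i) = tau -> rho' (wid j) = tau2 -> rho = rho'.
  by move=> *; apply: rho_uniq.
case: (boolP [exists x, e x == rho ord_max]) => [/existsP[x /eqP ex] | nhit].
  exact: (wilson_pair_inl_hit q q2 ij PTrho rho_i rho_j rho_uniq ex).
apply: (wilson_pair_inl_miss q q2 ij PTrho rho_i rho_j rho_uniq) => x ex.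
by move: nhit; rewrite negb_exists => /forallP/(_ x); rewrite ex eqxx.
Qed.

(* A symbol of T * Q' and a symbol y of U: a row of kind (b) through e y. *)
Lemma wilson_pair_inl_inr i j tau q y : i != j ->
  exists! r, wilson_row r /\ r i = inl (tau, q) /\ r j = inr y.
Proof.
move=> ij; have [rho [[PTrho [rho_i rho_m]] rho_uniq]] := oaT (wid_neq_max i) tau (e y).
have [sg [[PQsg [sg_i sg_j]] sg_uniq]] := oaQ ij (val q) c.
exists (merge_row rho sg y); split.
  split; first by apply: Or32; exists rho, sg, y; split=> //; apply: row_not_const sg_i.
  by split; [apply/merge_row_inl | apply/merge_row_inr].
move=> r [[[? [? [_ _ _ ->]]] | [rho' [sg' [x' [PTr' ex' PQsg' _ ->]]]] |
          [pi [_ ->]]] [r_i r_j]].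
- by rewrite ffunE in r_j.
- move/merge_row_inl: r_i => [r_i s_i]; move/merge_row_inr: r_j => [s_j xy]; subst y.
  have <- := rho_uniq _ (conj PTr' (conj r_i (esym ex'))).
  by have <- := sg_uniq _ (conj PQsg' (conj s_i s_j)).
- by rewrite ffunE in r_i.
Qed.

(* Two symbols of U: only the rows of kind (c) qualify, since a row of kind
   (b) meeting U twice would agree with the constant row in two columns. *)
Lemma wilson_pair_inr_inr i j x y : i != j ->
  exists! r, wilson_row r /\ r i = inr x /\ r j = inr y.
Proof.
move=> ij; have [pi [[PUpi [pi_i pi_j]] pi_uniq]] := oaU ij x y.
exists [ffun l => inr (pi l)]; split.
  split; first by apply: Or33; exists pi.
  by rewrite !ffunE pi_i pi_j.
move=> r [[[? [? [_ _ _ ->]]] | [rho' [sg' [x' [_ _ PQsg' nconst ->]]]] |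
          [pi' [PUpi' ->]]] [r_i r_j]].
- by rewrite ffunE in r_i.
- move/merge_row_inr: r_i => [s_i _]; move/merge_row_inr: r_j => [s_j _].
  have [sg0 [_ sg0_uniq]] := oaQ ij c c.
  case: nconst; rewrite -(sg0_uniq _ (conj PQsg' (conj s_i s_j))).
  by apply: sg0_uniq; rewrite !ffunE.
- move: r_i r_j; rewrite !ffunE => -[r_i] [r_j].
  by rewrite (pi_uniq pi').
Qed.

Lemma wilson_OA : is_OA wilson_row.
Proof.
move=> i j ij [[tau q] | x] [[tau2 q2] | y].
- exact: wilson_pair_inl_inl.
- exact: wilson_pair_inl_inr.
- have ji : j != i by rewrite eq_sym.
  have [r [[Pr [r_j r_i]] r_uniq]] := wilson_pair_inl_inr tau2 q2 x ji.
  by exists r; split=> // r' [Pr' [r'_i r'_j]]; apply: r_uniq.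
- exact: wilson_pair_inr_inr.
Qed.
End Wilson.

Lemma OA_wilson k m t u : OA_exists k.+1 t -> OA_const_exists k m.+1 ->
  OA_exists k m -> OA_exists k u -> u <= t -> OA_exists k (m * t + u).
Proof.
move=> [T [PT [cT oaT]]] [Q [PQ [cQ oaQ [c PQc]]]] hm hu ut.
have cQ' : #|{: {x : Q | x != c}}| = m by rewrite card_sig cardC1 cQ.
have [PQ' oaQ'] := OA_on hm cQ'; have [PU oaU] := OA_on hu (card_ord u).
pose e (x : 'I_u) : T := enum_val (cast_ord (esym cT) (widen_ord ut x)).
have e_inj : injective e.
  by move=> x y /enum_val_inj/cast_ord_inj/(congr1 val) /= /val_inj.
eexists; eexists; split; last exact: (wilson_OA oaT oaQ PQc oaQ' oaU e_inj).
by rewrite card_sum card_prod cQ' cT card_ord mulnC.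
Qed.

Definition odd_fact (k : nat) : nat := \prod_(i < k.+1 | odd i) i.

Lemma odd_fact_odd k : odd (odd_fact k).
Proof. by rewrite /odd_fact; elim/big_ind: _ => // x y ox oy; rewrite oddM ox. Qed.

Lemma dvdn_odd_fact p k : odd p -> p <= k -> p %| odd_fact k.
Proof. by move=> op pk; rewrite /odd_fact (bigD1 (Ordinal (pk : p < k.+1))) ?dvdn_mulr. Qed.

Lemma prime_dvdn_odd_fact p k : prime p -> p %| odd_fact k -> p <= k.
Proof.
move=> pp; rewrite /odd_fact Euclid_dvd_prod //.
elim/big_ind: _ => // [b1 b2 IH1 IH2 /orP[/IH1 | /IH2] // | i oi pi].
by apply: leq_trans (dvdn_leq (odd_gt0 oi) pi) _; rewrite -ltnS.
Qed.

Lemma prime_factors_ge_odd k x : odd x ->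
  (forall p, prime p -> odd p -> p <= k -> ~~ (p %| x)) -> prime_factors_ge k.+1 x.
Proof.
move=> ox hx p pp px; rewrite ltnNge; apply/negP => pk.
case: (even_prime pp) => [p2 | op]; last by move: (hx p pp op pk); rewrite px.
by move: px; rewrite p2 dvdn2 ox.
Qed.

Lemma prime_factors_ge_coprime_odd_fact k x : odd x ->
  prime_factors_ge k.+1 x <-> coprime x (odd_fact k).
Proof.
move=> ox; split=> [hx | cx].
  apply: contraT => not_cop.
  have g_gt1 : 1 < gcdn x (odd_fact k).
    rewrite ltn_neqAle eq_sym not_cop gcdn_gt0 odd_gt0 ?orbT //; exact: odd_fact_odd.
  have pg := pdiv_dvd (gcdn x (odd_fact k)); have pp := pdiv_prime g_gt1.
  have := hx _ pp (dvdn_trans pg (dvdn_gcdl _ _)).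
  by have := prime_dvdn_odd_fact pp (dvdn_trans pg (dvdn_gcdr _ _)); lia.
apply: prime_factors_ge_odd => // p pp op pk; apply/negP => px.
have : p %| gcdn x (odd_fact k) by rewrite dvdn_gcd px dvdn_odd_fact.
by move: cx; rewrite /coprime => /eqP ->; rewrite dvdn1 => /eqP p1; rewrite p1 in pp.
Qed.

Lemma odd_prime_gt2 p : prime p -> odd p -> 2 < p.
Proof.
by move=> pp op; rewrite ltn_neqAle prime_gt1 // andbT; apply: contraTneq op => <-.
Qed.

Lemma subnDAK n a b : a + b <= n -> n - a = n - (a + b) + b.
Proof. lia. Qed.

Lemma coprime_addMr a b N : coprime (a + b * N) N = coprime a N.
Proof. by rewrite -coprime_modl addnC modnMDl coprime_modl. Qed.

Lemma progression_one_multiple p D (f : nat -> nat) :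
  prime p -> 2 < p -> ~~ (p %| D) ->
  (forall j1 j2, j1 < j2 < 3 ->
     f j1 + (j2 - j1) * D = f j2 \/ f j2 + (j2 - j1) * D = f j1) ->
  forall j1 j2, j1 < j2 < 3 -> ~~ ((p %| f j1) && (p %| f j2)).
Proof.
move=> pp p_gt2 pD hf j1 j2 j12; apply/andP => -[d1 d2].
have : p %| (j2 - j1) * D.
  case: (hf _ _ j12) => E; [move: d2 | move: d1].
    by rewrite -E (dvdn_addr _ d1).
  by rewrite -E (dvdn_addr _ d2).
rewrite Euclid_dvdM // (negbTE pD) orbF => /dvdn_leq; lia.
Qed.

Lemma pick_one_of_three (a b : nat -> bool) :
  (forall j1 j2, j1 < j2 < 3 -> ~~ (a j1 && a j2)) ->
  (forall j1 j2, j1 < j2 < 3 -> ~~ (b j1 && b j2)) ->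
  exists2 j, j < 3 & ~~ a j && ~~ b j.
Proof.
move=> ha hb; move: (ha 0 1 isT) (ha 0 2 isT) (ha 1 2 isT).
move: (hb 0 1 isT) (hb 0 2 isT) (hb 1 2 isT).
case a0: (a 0); case a1: (a 1); case a2: (a 2);
  case b0: (b 0); case b1: (b 1); case b2: (b 2) => //= *;
  by [exists 0; rewrite ?a0 ?b0 | exists 1; rewrite ?a1 ?b1 | exists 2; rewrite ?a2 ?b2].
Qed.

Lemma sieve_prime_step p N n m t : prime p -> 2 < p -> ~~ (p %| N) ->
  coprime m p -> m * (t + 2 * (2 * N)) <= n ->
  exists2 j, j < 3 &
    ~~ (p %| t + j * (2 * N)) && ~~ (p %| n - m * (t + j * (2 * N))).
Proof.
move=> pp p_gt2 pN mp big.
have p2N : ~~ (p %| 2 * N).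
  rewrite Euclid_dvdM // negb_or pN andbT; apply/negP => /dvdn_leq; lia.
have pm2N : ~~ (p %| m * (2 * N)).
  by rewrite Euclid_dvdM // negb_or p2N andbT -prime_coprime // coprime_sym.
apply: pick_one_of_three.
  apply: (@progression_one_multiple _ _ (fun j => t + j * (2 * N)) pp p_gt2 p2N)
    => j1 j2 /andP[lt12 _]; left.
  by rewrite -addnA -mulnDl subnKC // ltnW.
apply: (@progression_one_multiple _ _ (fun j => n - m * (t + j * (2 * N))) pp p_gt2 pm2N)
  => j1 j2 /andP[lt12 lt23]; right.
have : m * (t + j2 * (2 * N)) <= n.
  apply: leq_trans big; rewrite leq_mul2l leq_add2l leq_mul2r.
  by move: lt23; rewrite ltnS => ->; rewrite !orbT.
have -> : m * (t + j2 * (2 * N)) = m * (t + j1 * (2 * N)) + (j2 - j1) * (m * (2 * N)).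
  by rewrite [(j2 - j1) * _]mulnCA -mulnDr -addnA -mulnDl subnKC // ltnW.
by move=> /subnDAK ->.
Qed.

(* The sieve: for odd O and m prime to O, some t in [t0, t0 + 2 O) is odd
   and makes both t and n - m t prime to O.  By induction on O, treating one
   prime factor p = pdiv O at a time with sieve_prime_step (shifts by
   multiples of 2 (O / p) preserve the coprimality already obtained). *)
Lemma sieve O n m t0 : odd O -> coprime m O -> m * (t0 + 2 * O) <= n ->
  exists t, [/\ t0 <= t < t0 + 2 * O, odd t, coprime t O & coprime (n - m * t) O].
Proof.
elim/ltn_ind: O => O IH oO mO big.
have [O_le1 | O_gt1] := leqP O 1.
  have O1 : O = 1 by move: oO O_le1; case: (O) => [|[]].
  rewrite O1; exists (if odd t0 then t0 else t0.+1); rewrite !coprimen1.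
  by case: ifP => [ot0 | /negbT et0]; split=> //=; lia.
set p := pdiv O; have pp : prime p := pdiv_prime O_gt1.
set N := O %/ p; have eO : O = p * N by rewrite mulnC divnK // pdiv_dvd.
have [op oN] : odd p /\ odd N by apply/andP; rewrite -oddM -eO.
have p_gt2 := odd_prime_gt2 pp op.
have ltNO : N < O by rewrite eO ltn_Pmull ?prime_gt1 ?odd_gt0.
have mN : coprime m N by apply: coprime_dvdr mO; rewrite eO dvdn_mull.
have mp : coprime m p by apply: coprime_dvdr mO; rewrite eO dvdn_mulr.
have NO : 3 * N <= O by rewrite eO leq_mul2r p_gt2 orbT.
have big_N : m * (t0 + 2 * N) <= n.
  by apply: leq_trans big; rewrite leq_mul2l leq_add2l leq_mul2l ltnW ?orbT.
have [t [/andP[t0t tN] ot tNc uNc]] := IH N ltNO oN mN big_N.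
have [pN | pN] := boolP (p %| N).
  exists t; rewrite eO !coprimeMr tNc uNc !(coprime_dvdr pN) //.
  by rewrite t0t; split=> //; lia.
have big_t : m * (t + 2 * (2 * N)) <= n.
  by apply: leq_trans big; rewrite leq_mul2l; apply/orP; right; lia.
have [j j3 /andP[pt pu]] := sieve_prime_step pp p_gt2 pN mp big_t.
have mtj : m * (t + j * (2 * N)) <= n.
  by apply: leq_trans big_t; rewrite leq_mul2l leq_add2l leq_mul2r -ltnS j3 !orbT.
have shift : n - m * t = n - m * (t + j * (2 * N)) + (m * j * 2) * N.
  have eB : m * (t + j * (2 * N)) = m * t + m * j * 2 * N by rewrite mulnDr !mulnA.
  by rewrite eB in mtj *; apply: subnDAK.
have cop_p x : coprime x p = ~~ (p %| x) by rewrite coprime_sym prime_coprime.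
have tjN : coprime (t + j * (2 * N)) N by rewrite mulnA coprime_addMr.
have ujN : coprime (n - m * (t + j * (2 * N))) N.
  by rewrite -(coprime_addMr _ (m * j * 2)) -shift.
exists (t + j * (2 * N)); rewrite eO !coprimeMr !cop_p pt pu tjN ujN.
have jle : j * (2 * N) <= 2 * (2 * N) by rewrite leq_mul2r -ltnS j3 orbT.
rewrite oddD !oddM /= andbF addbF ot -eO; split=> //; lia.
Qed.

Lemma prime_factors_ge_weaken k x : prime_factors_ge k.+1 x -> prime_factors_ge k x.
Proof. by move=> hx p pp px; apply/ltnW/hx. Qed.

(* Wilson's construction with n = m t + u, where t ~ n / (m + 1) and u are
   chosen by the sieve to have no prime factor <= k, so that the cyclic
   construction provides the OA(k+1, t) and the OA(k, u). *)
Lemma OA_wilson_sieved k m n : OA_exists k m -> OA_const_exists k m.+1 ->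
  coprime m (odd_fact k) -> odd (n + m) ->
  (m + 1) * (m * (2 * odd_fact k + 1)) <= n -> OA_exists k n.
Proof.
move=> hm hm1 mO onm big; set O := odd_fact k in mO big.
set D := n %/ (m + 1).
have hD : m * (2 * O + 1) <= D by rewrite leq_divRL ?addn_gt0 ?orbT // mulnC.
have Dn : D * (m + 1) <= n by rewrite leq_divM.
have bound_t : m * (D + 1 + 2 * O) <= n.
  apply: leq_trans Dn; rewrite (_ : m * _ = D * m + m * (2 * O + 1)); last by ring.
  by rewrite [D * (m + 1)]mulnDr muln1 leq_add2l.
have [t [/andP[Dt tD] ot tO uO]] := sieve (odd_fact_odd k) mO bound_t.
have mtn : m * t <= n by apply: leq_trans bound_t; rewrite leq_mul2l (ltnW tD) orbT.
have ntm : n < m * t + t.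
  rewrite (_ : m * t + t = t * (m + 1)); last by ring.
  apply: leq_trans (_ : (D + 1) * (m + 1) <= _); last by rewrite leq_mul2r Dt orbT.
  by rewrite /D addn1 ltn_ceil // addn1.
set u := n - m * t.
have ut : u <= t by rewrite /u leq_subLR ltnW.
have ou : odd u by rewrite /u oddB // oddM ot andbT -oddD.
have ht : prime_factors_ge k.+1 t by apply/prime_factors_ge_coprime_odd_fact.
have hu : prime_factors_ge k.+1 u by apply/prime_factors_ge_coprime_odd_fact.
have hT := OA_of_const (OA_const_cyclic (odd_gt0 ot) ht).
have hU := OA_of_const (OA_const_cyclic (odd_gt0 ou) (prime_factors_ge_weaken hu)).
by have := OA_wilson hT hm1 hm hU ut; rewrite /u subnKC.
Qed.

(* A power of 2 that is 1 modulo every odd prime p <= k (Euler's theorem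
   modulo odd_fact k), and large enough to index k columns. *)
Lemma pow2_one_mod_small_primes k : exists s, [/\ 0 < s, k <= 2 ^ s &
  forall p, prime p -> odd p -> p <= k -> 2 ^ s = 1 %[mod p]].
Proof.
set O := odd_fact k; have oO : odd O := odd_fact_odd k.
have tO : 0 < totient O by rewrite totient_gt0 odd_gt0.
exists (totient O * k.+1); split; first by rewrite muln_gt0 tO.
  apply/ltnW/(leq_trans (ltn_expl k (isT : 1 < 2))).
  by rewrite leq_exp2l // (leq_trans (leqnSn k)) ?leq_pmull.
move=> p pp op pk; have pO : p %| O := dvdn_odd_fact op pk.
have eu : 2 ^ totient O = 1 %[mod O] by apply: Euler_exp_totient; rewrite coprime2n.
have e2 : 2 ^ (totient O * k.+1) = 1 %[mod O] by rewrite expnM -modnXm eu modnXm exp1n.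
by rewrite -(modn_dvdm _ pO) e2 (modn_dvdm _ pO).
Qed.

(* The two multipliers used in Wilson's construction, one of each parity:
   m = 2^s (a field size, with m + 1 free of small prime factors) and
   m = 2^(s+1) - 1 (free of small prime factors, with m + 1 a field size). *)
Lemma even_multiplier k : exists m,
  [/\ ~~ odd m, OA_exists k m, OA_const_exists k m.+1 & coprime m (odd_fact k)].
Proof.
have [s [s_gt0 ks two_s]] := pow2_one_mod_small_primes k.
have e2s : ~~ odd (2 ^ s) by rewrite oddX negb_or -lt0n s_gt0.
exists (2 ^ s); split=> //.
- exact/OA_of_const/OA_const_pow2.
- apply: OA_const_cyclic => //; apply/prime_factors_ge_weaken/prime_factors_ge_odd.
    by rewrite /= e2s.
  move=> p pp op pk; rewrite /dvdn -addn1 -modnDml (two_s p pp op pk) modnDml modn_small //.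
  exact: odd_prime_gt2.
- by rewrite coprimeXl // coprime2n odd_fact_odd.
Qed.

Lemma odd_multiplier k : exists m,
  [/\ odd m, OA_exists k m, OA_const_exists k m.+1 & coprime m (odd_fact k)].
Proof.
have [s [s_gt0 ks two_s]] := pow2_one_mod_small_primes k.
set m := 2 ^ s.+1 - 1.
have em : m.+1 = 2 ^ s.+1 by rewrite /m -addn1 subnK // expn_gt0.
have om : odd m by rewrite /m oddB ?expn_gt0 // oddX /=.
have hm : prime_factors_ge k.+1 m.
  apply: prime_factors_ge_odd => // p pp op pk; apply/negP => pm.
  have : m.+1 %% p = 2 %% p by rewrite em expnS -modnMmr (two_s p pp op pk) modnMmr muln1.
  rewrite -addn1 -modnDml (eqP pm) add0n !modn_small ?(odd_prime_gt2 pp op) //.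
  exact: ltnW (odd_prime_gt2 pp op).
exists m; split=> //.
- exact/OA_of_const/(OA_const_cyclic (odd_gt0 om))/prime_factors_ge_weaken.
- rewrite em; apply: OA_const_pow2 => //.
  by rewrite expnS; apply: leq_trans ks _; rewrite leq_pmull.
- exact/prime_factors_ge_coprime_odd_fact.
Qed.

(* Orthogonal arrays OA(k, n) exist for all large n (Chowla, Erdos and
   Straus): Wilson's construction with the multiplier of parity opposite to
   that of n. *)
Lemma OA_exists_large k : exists N0, forall n, N0 <= n -> OA_exists k n.
Proof.
have [me [eme hme hme1 cme]] := even_multiplier k.
have [mo [omo hmo hmo1 cmo]] := odd_multiplier k.
pose bound m := (m + 1) * (m * (2 * odd_fact k + 1)).
exists (bound me + bound mo) => n big; case: (boolP (odd n)) => on.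
  apply: (OA_wilson_sieved hme hme1 cme); first by rewrite oddD on (negbTE eme).
  exact: leq_trans (leq_addr _ _) big.
apply: (OA_wilson_sieved hmo hmo1 cmo); first by rewrite oddD (negbTE on) omo.
exact: leq_trans (leq_addl _ _) big.
Qed.

Section AffineHyperplanes.
Local Open Scope ring_scope.

(* Any d+1 points p_0, ..., p_d of F^(d+1) lie on an affine hyperplane
   v *m f = c: the matrix M with rows p_i - p_0 has a zero row, hence is
   singular, and f can be any nonzero vector of its right kernel. *)
Lemma hyperplane_through (F : finFieldType) d (P : {set 'rV[F]_d.+1}) :
  (#|P| <= d.+1)%N ->
  exists (f : 'cV[F]_d.+1) (c : 'M[F]_1), f != 0 /\ forall v, v \in P -> v *m f = c.
Proof.
move=> cP; set p0 := nth 0 (enum P) 0.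
pose M : 'M[F]_d.+1 := \matrix_(i < d.+1) (nth p0 (enum P) i - p0).
have M0 : row 0 M = 0.
  by rewrite rowK (_ : nth p0 _ 0 = p0) ?subrr // /p0; case: (enum P).
have : kermx M^T != 0.
  rewrite kermx_eq0 row_free_unit unitmxE det_tr (expand_det_row _ 0) big1 ?unitr0 //.
  by move=> j _; move/matrixP/(_ 0 j): M0; rewrite !mxE => ->; rewrite mul0r.
case/rowV0Pn => z /sub_kermxP zM z0.
have Mz : M *m z^T = 0 by rewrite -(trmxK M) -trmx_mul zM trmx0.
exists z^T, (p0 *m z^T); split=> [|v vP]; first by rewrite trmx_eq0.
have iv : (index v (enum P) < d.+1)%N.
  by apply: leq_trans cP; rewrite cardE index_mem mem_enum.
move/(congr1 (row (Ordinal iv))): Mz; rewrite row_mul rowK nth_index ?mem_enum //.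
by rewrite row0 mulmxBl => /eqP; rewrite subr_eq0 => /eqP.
Qed.

Lemma linear_form_avoids (F : fieldType) d (f : 'cV[F]_d.+1) (c : 'M[F]_1) :
  f != 0 -> exists v : 'rV[F]_d.+1, v *m f != c.
Proof.
move=> f0; have [j fj] : exists j, f j 0 != 0.
  apply/existsP; apply: contraR f0; rewrite negb_exists => /forallP f0.
  by apply/eqP/matrixP => i k; rewrite ord1 mxE; apply/eqP/negPn/f0.
have [->|c0] := eqVneq c 0; last by exists 0; rewrite mul0mx eq_sym.
exists (delta_mx 0 j); rewrite -rowE; apply: contra fj => /eqP/matrixP/(_ 0 0).
by rewrite !mxE => ->.
Qed.
End AffineHyperplanes.

Section InflatedAffineSpace.
Variables (F : finFieldType) (d : nat) (S : finType) (R : {set {ffun F -> S}}).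
Hypothesis oaR : is_OA (fun r => r \in R).
Variable s0 : S. (* S is nonempty *)
Local Open Scope ring_scope.
Local Notation V := 'rV[F]_d.+1.
Local Notation T := (V * S)%type.

Definition line (u w : V) : {set V} := [set u + t *: w | t : F].
Definition lines : {set {set V}} :=
  [set L | [exists u, exists w, (w != 0) && (L == line u w)]].

Definition line_param (L : {set V}) : V * V :=
  odflt (0, 0) [pick uw : V * V | (uw.2 != 0) && (L == line uw.1 uw.2)].
Definition base L := (line_param L).1.
Definition dir L := (line_param L).2.

Lemma line_paramP L : L \in lines -> dir L != 0 /\ L = line (base L) (dir L).
Proof.
rewrite inE => /existsP[u /existsP[w /andP[w0 /eqP E]]].
rewrite /base /dir /line_param; case: pickP => [[u' w'] /andP[/= ? /eqP ?] | H] //=.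
by move: (H (u, w)); rewrite /= w0 E eqxx.
Qed.

Lemma param_inj (u w : V) : w != 0 -> injective (fun t : F => u + t *: w).
Proof.
move=> w0 t1 t2 /addrI /eqP; rewrite -subr_eq0 -scalerBl scaler_eq0 (negbTE w0) orbF.
by rewrite subr_eq0 => /eqP.
Qed.

Lemma line_through_two (u w : V) a b : w != 0 -> a != b ->
  line u w = line (u + a *: w) ((u + b *: w) - (u + a *: w)).
Proof.
move=> w0 ab; have ba : b - a != 0 by rewrite subr_eq0 eq_sym.
have -> : (u + b *: w) - (u + a *: w) = (b - a) *: w.
  by rewrite opprD addrACA subrr add0r scalerBl.
have comb s : u + a *: w + s *: ((b - a) *: w) = u + (a + s * (b - a)) *: w.
  by rewrite scalerA -addrA -scalerDl.
apply/setP => v; apply/imsetP/imsetP => [[t _ ->]|[s _ ->]].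
  exists ((t - a) / (b - a)) => //; rewrite comb divfK //.
  by congr (_ + _ *: _); rewrite addrC subrK.
by exists (a + s * (b - a)); rewrite ?comb.
Qed.

Lemma line_in_hyperplane (u w : V) (f : 'cV[F]_d.+1) c a b : a != b ->
  (u + a *: w) *m f = c -> (u + b *: w) *m f = c -> forall t, (u + t *: w) *m f = c.
Proof.
rewrite !mulmxDl -!scalemxAl => ab ha hb t; rewrite mulmxDl -scalemxAl.
have : (a - b) *: (w *m f) = 0.
  by apply/eqP; rewrite scalerBl subr_eq0; apply/eqP/(addrI (u *m f)); rewrite ha hb.
move/eqP; rewrite scaler_eq0 subr_eq0 (negbTE ab) /= => /eqP wf.
by rewrite -ha wf !scaler0.
Qed.

Definition block (L : {set V}) (r : {ffun F -> S}) : {set T} :=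
  [set (base L + t *: dir L, r t) | t : F].
Definition blocks : {set {set T}} := [set block L r | L in lines, r in R].
Definition fibre (v : V) : {set T} := [set x : T | x.1 == v].
Definition fibres : {set {set T}} := [set fibre v | v : V].

Lemma fibres_trivIset : trivIset fibres.
Proof.
apply/trivIsetP => A B /imsetP[v _ ->] /imsetP[v' _ ->] neq.
apply/pred0P => x /=; rewrite !inE; apply/negP => /andP[/eqP e1 /eqP e2].
by move: neq; rewrite -e1 -e2 eqxx.
Qed.

Lemma pblock_fibres x : pblock fibres x = fibre x.1.
Proof. by apply: def_pblock; [exact: fibres_trivIset | apply: imset_f | rewrite inE]. Qed.

Lemma fibre_inj : injective fibre.
Proof.
move=> v v' e; have : (v, s0) \in fibre v' by rewrite -e inE.
by rewrite inE => /eqP.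
Qed.

Lemma card_fibre v : #|fibre v| = #|S|.
Proof.
rewrite (_ : fibre v = [set (v, s) | s : S]) ?card_imset ?cardsT // => [s s' [] //|].
apply/setP => x; rewrite inE; apply/eqP/imsetP => [<-|[s _ ->]] //.
by exists x.2; case: x.
Qed.

Lemma card_block L r : L \in lines -> #|block L r| = #|F|.
Proof.
case/line_paramP => w0 _; rewrite card_imset ?cardsT // => t t' [].
by move/(param_inj w0).
Qed.

Lemma line_through_points (v v' : V) : v != v' ->
  exists2 L, L \in lines & exists t t',
    [/\ t != t', v = base L + t *: dir L & v' = base L + t' *: dir L].
Proof.
move=> vv'; have w0 : v' - v != 0 by rewrite subr_eq0 eq_sym.
set L := line v (v' - v).
have LL : L \in lines.
  by rewrite inE; apply/existsP; exists v; apply/existsP; exists (v' - v); rewrite w0 eqxx.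
exists L => //; have [_ EL] := line_paramP LL.
have /imsetP[t _ ev] : v \in line (base L) (dir L).
  by rewrite -EL; apply/imsetP; exists 0; rewrite // scale0r addr0.
have /imsetP[t' _ ev'] : v' \in line (base L) (dir L).
  by rewrite -EL; apply/imsetP; exists 1; rewrite // scale1r addrC subrK.
exists t, t'; split=> //; apply: contra vv' => /eqP tt'.
by rewrite ev ev' tt'.
Qed.

Lemma lines_eq L L' t1 t2 t1' t2' : L \in lines -> L' \in lines -> t1' != t2' ->
  base L + t1 *: dir L = base L' + t1' *: dir L' ->
  base L + t2 *: dir L = base L' + t2' *: dir L' -> L = L'.
Proof.
move=> /line_paramP[w0 EL] /line_paramP[w0' EL'] t12 e1 e2.
rewrite EL EL' (line_through_two _ w0' t12) -e1 -e2 -line_through_two //.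
apply: contra t12 => /eqP t12; apply/eqP/(@param_inj (base L') _ w0').
by rewrite /= -e1 -e2 t12.
Qed.

Lemma block_meet_fibre b g : b \in blocks -> g \in fibres -> (#|b :&: g| <= 1)%N.
Proof.
move=> /imset2P[L r LL _ ->] /imsetP[v _ ->]; have [w0 _] := line_paramP LL.
rewrite leqNgt; apply/negP => /card_gt1P[x [y [xb yb]]]; apply/negP; rewrite negbK.
move: xb yb; rewrite !inE.
move=> /andP[/imsetP[t1 _ ->] /eqP e1] /andP[/imsetP[t2 _ ->] /eqP e2].
by rewrite (param_inj w0 (etrans e1 (esym e2))).
Qed.

Lemma point_in_block L (r : {ffun F -> S}) (x : T) t :
  x.1 = base L + t *: dir L -> r t = x.2 -> x \in block L r.
Proof. by move=> e1 e2; apply/imsetP; exists t; rewrite // -e1 e2 -surjective_pairing. Qed.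

(* Two points in different fibres lie in exactly one block: the one on the
   line through their first coordinates given by the unique OA row taking
   their second coordinates at their two parameters. *)
Lemma blocks_pair_unique x y : pblock fibres x != pblock fibres y ->
  #|[set b in blocks | (x \in b) && (y \in b)]| = 1%N.
Proof.
rewrite !pblock_fibres => hxy; have xy1 : x.1 != y.1 by apply: contra hxy => /eqP ->.
have [L LL [t1 [t2 [t12 ex ey]]]] := line_through_points xy1.
have [r [[rR [r1 r2]] r_uniq]] := oaR t12 x.2 y.2.
apply/eqP/cards1P; exists (block L r); apply/setP => b; rewrite !inE.
apply/andP/eqP => [[/imset2P[L' r' LL' r'R ->] /andP[]] | ->]; last first.
  by split; [apply: imset2_f | rewrite (point_in_block ex r1) (point_in_block ey r2)].
move=> /imsetP[t1' _ ex'] /imsetP[t2' _ ey'].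
have e1 : base L + t1 *: dir L = base L' + t1' *: dir L' by rewrite -ex ex'.
have e2 : base L + t2 *: dir L = base L' + t2' *: dir L' by rewrite -ey ey'.
have t12' : t1' != t2'.
  by apply: contra xy1 => /eqP t; rewrite ex' ey' t.
have EL := lines_eq LL LL' t12' e1 e2; subst L'.
have [w0 _] := line_paramP LL.
have t1e : t1 = t1' := param_inj w0 e1.
have t2e : t2 = t2' := param_inj w0 e2.
by rewrite (r_uniq r') // t1e t2e ex' ey'.
Qed.

(* The preimage H * S of an affine hyperplane H is a strong subspace: it is
   a union of fibres, and a block meeting it twice lies on a line meeting H
   twice, hence inside H. *)
Lemma hyperplane_strong_subspace (f : 'cV[F]_d.+1) c :
  strong_subspace fibres blocks [set x : T | x.1 *m f == c].
Proof.
split.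
  apply/setP => x; apply/idP/bigcupP => [xH | [g /andP[/imsetP[v _ ->] gH] xg]].
    exists (fibre x.1); last by rewrite inE.
    rewrite imset_f //=; apply/subsetP => z; rewrite !inE => /eqP ->.
    by rewrite inE in xH.
  exact: (subsetP gH).
move=> b /imset2P[L r _ _ ->] /card_gt1P[x [y [xi yi xy]]].
move: xi yi; rewrite !inE.
move=> /andP[/imsetP[t1 _ ex] hx] /andP[/imsetP[t2 _ ey] hy].
rewrite ex ey /= in hx hy xy; have t12 : t1 != t2 by apply: contra xy => /eqP ->.
apply/subsetP => z /imsetP[t _ ->]; rewrite inE /=; apply/eqP.
exact: (line_in_hyperplane t12 (eqP hx) (eqP hy)).
Qed.

(* Strong dimension: any d+1 points project into an affine hyperplane. *)
Lemma inflated_strong_dim : strong_dim_ge fibres blocks d.+1.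
Proof.
move=> A cA; have cPA : (#|[set a.1 | a in A]| <= d.+1)%N.
  exact: leq_trans (leq_imset_card _ _) cA.
have [f [c [f0 hf]]] := hyperplane_through cPA.
exists [set x : T | x.1 *m f == c]; split; first exact: hyperplane_strong_subspace.
  have [v fv] := linear_form_avoids c f0.
  apply/negP => /eqP H; have : (v, s0) \in [set: T] by rewrite inE.
  by rewrite -H inE (negbTE fv).
by apply/subsetP => a aA; rewrite inE hf // imset_f.
Qed.

Lemma inflated_GDD : [/\ is_kGDD #|F| fibres blocks,
  has_type #|S| (#|F| ^ d.+1) fibres & strong_dim_ge fibres blocks d.+1].
Proof.
split; last exact: inflated_strong_dim.
- split; last by move=> b /imset2P[L r LL _ ->]; apply: card_block.
  split; [|exact: block_meet_fibre | exact: blocks_pair_unique].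
  apply/and3P; split; [|exact: fibres_trivIset|].
    apply/eqP/setP => x; rewrite inE; apply/bigcupP; exists (fibre x.1).
      exact: imset_f.
    by rewrite inE.
  apply/imsetP => -[v _ e]; have : (v, s0) \in fibre v by rewrite inE.
  by rewrite -e inE.
- split; last by move=> g /imsetP[v _ ->]; apply: card_fibre.
  by rewrite card_imset ?cardsT ?card_mx ?mul1n //; exact: fibre_inj.
Qed.
End InflatedAffineSpace.

Lemma is_OA_rows (C S : finType) (P : {ffun C -> S} -> Prop) :
  is_OA P -> is_OA (fun r => r \in [set r | `[< P r >]]).
Proof.
move=> oa i j ij a b; have [r [[Pr rij] r_uniq]] := oa i j ij a b.
exists r; split=> [|r' [/[!inE]/asboolP Pr' r'ij]]; last exact: r_uniq.
by rewrite inE; split=> //; apply/asboolP.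
Qed.

(* The theorem: take F = GF(q), an OA(q, n) from OA_exists_large with its
   columns renamed by the elements of F, and the inflated affine space over
   F^d. *)
Theorem mainTheorem8 (d q : nat) (hd : 0 < d) (hq : prime_power q) :
  exists N : nat, forall n : nat, N <= n ->
    exists (T : finType) (G B : {set {set T}}),
      [/\ is_kGDD q G B, has_type n (q ^ d) G & strong_dim_ge G B d].
Proof.
case: hq => p [e [pp e_gt0 ->]]; have [F _ cF] := pPrimePowerField pp e_gt0.
have [N0 OA_large] := OA_exists_large (p ^ e).
exists (maxn N0 1) => n; rewrite geq_max => /andP[N0n n_gt0].
have [S [P [cS oa]]] := OA_large n N0n.
have /card_gt0P[s0 _] : 0 < #|S| by rewrite cS.
have cF' : #|F| = #|'I_(p ^ e)| by rewrite cF card_ord.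
have oaF := is_OA_rows (is_OA_reindex (card_bijK cF') (card_bij_invK cF') oa).
case: d hd => [//|d] _; have := inflated_GDD d oaF s0; rewrite cF cS => GDD.
by do 3!eexists; exact: GDD.
Qed.
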